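(* Let $(x,y)$ be a vertex of the polytope $P$. Then either $y$ is integral, or $y$ has exactly two noninteger components and for every $i\in F$ we have $x_i=0$ or $x_i=s_iy_i$.
   Context: Given a finite set $F$ of facilities with capacities $s_i\ge 0$, a demand $d$ and an integer $k$, let $P\subseteq\mathbb{R}^F\times\mathbb{R}^F$ be the set of $(x,y)$ satisfying $\sum_{i\in F}x_i=d$, $\sum_{i\in F}y_i=k$ (equality), $0\le x_i\le s_iy_i$ for all $i\in F$, and $0\le y_i\le 1$ for all $i\in F$. *)

From HB Require Import structures.
From mathcomp Require Import all_boot all_order all_algebra.
Set Implicit Arguments. Unset Strict Implicit. Unset Printing Implicit Defensive.
Import Order.TTheory GRing.Theory Num.Theory.
Local Open Scope ring_scope.

Definition inP (R : realFieldType) (F : finType) (s : F -> R) (d : R) (k : int)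
    (x y : F -> R) : Prop :=
  [/\ \sum_(i : F) x i = d,
      \sum_(i : F) y i = k%:~R,
      (forall i, 0 <= x i /\ x i <= s i * y i) &
      (forall i, 0 <= y i /\ y i <= 1)].

Definition vertexP (R : realFieldType) (F : finType) (s : F -> R) (d : R) (k : int)
    (x y : F -> R) : Prop :=
  inP s d k x y /\
  forall (x1 y1 x2 y2 : F -> R) (t : R),
    inP s d k x1 y1 -> inP s d k x2 y2 -> 0 < t -> t < 1 ->
    (forall i, x i = t * x1 i + (1 - t) * x2 i) ->
    (forall i, y i = t * y1 i + (1 - t) * y2 i) ->
    (forall i, x1 i = x2 i /\ y1 i = y2 i).

(* Call a coordinate of a point free if it lies strictly between its bounds:
   y_i with 0 < y_i < 1, or x_i with 0 < x_i < s_i y_i.  Moving y_i by v_i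
   and x_i by a_i v_i + w_i, where a_i = s_i if x_i = s_i y_i and 0
   otherwise, keeps every tight inequality tight as long as v (resp. w) is
   supported on the free y- (resp. x-) coordinates.  At a vertex such a
   direction must vanish once it also preserves the two sums (otherwise
   moving a little both ways writes the vertex as a midpoint of two points
   of P).  Those are two linear equations, so a vertex has at most two free
   coordinates in total.  Since sum_i y_i = k is an integer, the number of
   non-integral (i.e. free) y_i is not one; hence it is zero, or it is two
   and no x_i is free, which is the theorem. *)
From HB Require Import structures.
From mathcomp Require Import all_boot all_order all_algebra.
From mathcomp Require Import zify ring lra.
Import Order.TTheory GRing.Theory Num.Theory.
Local Open Scope ring_scope.

Section FiniteLinearAlgebra.
Variable R : comNzRingType.

Lemma sum_indicator (T : finType) (f : T -> R) (t : T) :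
  \sum_u f u * (u == t)%:R = f t.
Proof.
rewrite (bigD1 t) //= eqxx mulr1 big1 ?addr0 // => u /negbTE ut.
by rewrite ut mulr0.
Qed.

(* Two homogeneous linear equations in three unknowns have a nontrivial
   solution: the cross product of the coefficient rows, or, when its last
   entry vanishes, an explicit solution in the first two unknowns. *)
Lemma kernel_3x2 (a1 a2 a3 b1 b2 b3 : R) :
  exists c1 c2 c3 : R,
    [/\ [|| c1 != 0, c2 != 0 | c3 != 0],
        a1 * c1 + a2 * c2 + a3 * c3 = 0 &
        b1 * c1 + b2 * c2 + b3 * c3 = 0].
Proof.
have [minor0|minor_neq0] := eqVneq (a1 * b2 - a2 * b1) 0; last first.
  exists (a2 * b3 - a3 * b2), (a3 * b1 - a1 * b3), (a1 * b2 - a2 * b1).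
  by split; [rewrite minor_neq0 !orbT | ring | ring].
have [a_nz|/norP[/negPn/eqP a10 /negPn/eqP a20]] := boolP ((a1 != 0) || (a2 != 0)).
  exists (- a2), a1, 0; split; last by apply: etrans minor0; ring.
    by rewrite oppr_eq0 eqxx orbF orbC a_nz.
  by ring.
have [b_nz|/norP[/negPn/eqP b10 /negPn/eqP b20]] := boolP ((b1 != 0) || (b2 != 0)).
  exists (- b2), b1, 0; split; last by ring.
    by rewrite oppr_eq0 eqxx orbF orbC b_nz.
  by rewrite a10 a20; ring.
exists 1, 0, 0; split; first by rewrite oner_eq0.
  by rewrite a10; ring.
by rewrite b10; ring.
Qed.

Lemma card_le2_of_trivial_kernel (T : finType) (alpha beta : T -> R) (S : pred T) :
  (forall z : T -> R, (forall t, t \notin S -> z t = 0) ->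
     \sum_t alpha t * z t = 0 -> \sum_t beta t * z t = 0 ->
     forall t, z t = 0) ->
  (#|S| <= 2)%N.
Proof.
move=> trivial_kernel; rewrite leqNgt cardE; apply/negP.
have := enum_uniq S; have memS t : t \in enum S -> t \in S by rewrite mem_enum.
case: (enum S) memS => [|t1 [|t2 [|t3 r]]] //= memS.
rewrite !inE negb_or => /and4P[/andP[t12 /norP[t13 _]] /norP[t23 _] _ _] _.
have [c1 [c2 [c3 [c_nz alpha0 beta0]]]] :=
  kernel_3x2 (alpha t1) (alpha t2) (alpha t3) (beta t1) (beta t2) (beta t3).
pose z t := (t == t1)%:R * c1 + (t == t2)%:R * c2 + (t == t3)%:R * c3.
have sum_z f : \sum_t f t * z t = f t1 * c1 + f t2 * c2 + f t3 * c3.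
  under eq_bigr do rewrite !mulrDr !mulrA.
  by rewrite !big_split /= -!mulr_suml !sum_indicator.
have z_out t : t \notin S -> z t = 0.
  move=> tS; have t_new u : u \in [:: t1; t2; t3] -> (t == u)%:R = 0 :> R.
    move=> u_in; case: eqVneq => // tu; move: tS; rewrite tu memS //.
    by move: u_in; rewrite !inE => /or3P[] /eqP ->; rewrite ?eqxx ?orbT.
  by rewrite /z !t_new ?inE ?eqxx ?orbT // !mul0r !addr0.
have z0 :=
  trivial_kernel z z_out (etrans (sum_z alpha) alpha0) (etrans (sum_z beta) beta0).
have z_at u : (u == t1)%:R * c1 + (u == t2)%:R * c2 + (u == t3)%:R * c3 = 0 := z0 u.
move: c_nz (z_at t1) (z_at t2) (z_at t3).
rewrite !eqxx [t2 == t1]eq_sym [t3 == t1]eq_sym [t3 == t2]eq_sym.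
rewrite (negbTE t12) (negbTE t13) (negbTE t23).
by rewrite !mul0r !mul1r !addr0 !add0r => /or3P[] /eqP.
Qed.
End FiniteLinearAlgebra.

Lemma card_sum_pred {T1 T2 : finType} (P : pred (T1 + T2)) :
  #|P| = (#|[pred i | P (inl i)]| + #|[pred j | P (inr j)]|)%N.
Proof. by rewrite -!sum1_card big_sumType. Qed.

Section StepSize.
Context {R : realFieldType}.

Lemma pointwise_step {A B : R} : 0 <= A -> (A = 0 -> B = 0) ->
  exists2 m, 0 < m & forall e, `|e| <= m -> 0 <= A + e * B.
Proof.
move=> A_ge0 AB; have [A0|A_neq0] := eqVneq A 0.
  by exists 1 => // e _; rewrite A0 (AB A0) mulr0 addr0.
have A_gt0 : 0 < A by rewrite lt_def A_neq0.
have B1_gt0 : 0 < `|B| + 1 by rewrite ltr_wpDl.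
exists (A / (`|B| + 1)); first by rewrite divr_gt0.
move=> e e_small; have eB_small : `|e * B| <= A.
  rewrite normrM; apply: le_trans (ler_wpM2r (normr_ge0 B) e_small) _.
  by rewrite mulrAC ler_pdivrMr // mulrDr mulr1 lerDl ltW.
by have := ler_norm (- (e * B)); rewrite normrN; lra.
Qed.

Lemma uniform_step {T : finType} {A B : T -> R} :
  (forall t, 0 <= A t) -> (forall t, A t = 0 -> B t = 0) ->
  exists2 m, 0 < m & forall e t, `|e| <= m -> 0 <= A t + e * B t.
Proof.
move=> A_ge0 AB.
suff [m m_gt0 step] : exists2 m, 0 < m &
    forall t, t \in enum T -> forall e, `|e| <= m -> 0 <= A t + e * B t.
  by exists m => // e t; apply: step; rewrite mem_enum.
elim: (enum T) => [|t ts [m m_gt0 step]]; first by exists 1.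
have [mt mt_gt0 step_t] := pointwise_step (A_ge0 t) (AB t).
exists (Num.min m mt); first by rewrite lt_min m_gt0 mt_gt0.
move=> u; rewrite inE => /orP[/eqP ->|u_ts] e /le_trans e_small.
  by apply: step_t; apply: e_small; rewrite ge_min lexx orbT.
by apply: step => //; apply: e_small; rewrite ge_min lexx.
Qed.
End StepSize.

Section Polytope.
Context {R : realFieldType} {F : finType} {s : F -> R} {d : R} {k : int}.

Definition slack (x y : F -> R) (c : (F + F) + (F + F)) : R :=
  match c with
  | inl (inl i) => x i
  | inl (inr i) => s i * y i - x i
  | inr (inl i) => y i
  | inr (inr i) => 1 - y i
  end.

Definition dslack (u v : F -> R) (c : (F + F) + (F + F)) : R :=
  match c with
  | inl (inl i) => u i
  | inl (inr i) => s i * v i - u i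
  | inr (inl i) => v i
  | inr (inr i) => - v i
  end.

Lemma inP_slackP (x y : F -> R) :
  inP s d k x y <->
  [/\ \sum_i x i = d, \sum_i y i = k%:~R & forall c, 0 <= slack x y c].
Proof.
split=> [[sx sy hx hy]|[sx sy hc]].
  split=> // -[[]|[]] i /=; rewrite ?subr_ge0.
  - exact: (hx i).1.
  - exact: (hx i).2.
  - exact: (hy i).1.
  - exact: (hy i).2.
split=> // i; split.
- exact: hc (inl (inl i)).
- by rewrite -subr_ge0; exact: hc (inl (inr i)).
- exact: hc (inr (inl i)).
- by rewrite -subr_ge0; exact: hc (inr (inr i)).
Qed.

Lemma slack_shift (x y u v : F -> R) (e : R) (c : (F + F) + (F + F)) :
  slack (fun i => x i + e * u i) (fun i => y i + e * v i) c =
  slack x y c + e * dslack u v c.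
Proof. by case: c => [[]|[]] i /=; ring. Qed.

(* Otherwise moving by +-m along it,
   for m small, gives two distinct points of P with midpoint (x, y). *)
Lemma vertex_no_direction {x y u v : F -> R} :
  vertexP s d k x y -> \sum_i u i = 0 -> \sum_i v i = 0 ->
  (forall c, slack x y c = 0 -> dslack u v c = 0) ->
  forall i, u i = 0 /\ v i = 0.
Proof.
move=> [/inP_slackP[sx sy slack_ge0] extreme] su sv tight.
have [m m_gt0 step] := uniform_step slack_ge0 tight.
have shifted_in e : `|e| <= m ->
    inP s d k (fun i => x i + e * u i) (fun i => y i + e * v i).
  move=> e_small; apply/inP_slackP; split=> [||c]; last by rewrite slack_shift step.
    by rewrite big_split /= -mulr_sumr su mulr0 addr0.
  by rewrite big_split /= -mulr_sumr sv mulr0 addr0.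
have m_small : `|m| <= m by rewrite ger0_norm // ltW.
have mN_small : `|- m| <= m by rewrite normrN.
have half_gt0 : 0 < 2^-1 :> R by rewrite invr_gt0 ltr0n.
have half_lt1 : 2^-1 < 1 :> R by rewrite invf_lt1 ?ltr0n ?ltr1n.
have midpoint (w z : F -> R) i :
    w i = 2^-1 * (w i + m * z i) + (1 - 2^-1) * (w i + - m * z i) by field.
move=> i; have [] := extreme _ _ _ _ _ (shifted_in m m_small) (shifted_in (- m) mN_small)
  half_gt0 half_lt1 (midpoint x u) (midpoint y v) i.
have opposite_steps_agree (z : R) : m * z = - m * z -> z = 0.
  move=> /eqP; rewrite mulNr -subr_eq0 opprK -mulrDl mulf_eq0 => /orP[|/eqP //].
  by rewrite gt_eqF ?addr_gt0.
by move=> /addrI/opposite_steps_agree u0 /addrI/opposite_steps_agree v0.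
Qed.

(* Along a direction that changes [y_i] by [v_i], a tight constraint
   [x_i = s_i y_i] forces [x_i] to change by [step_coef x y i * v_i]. *)
Definition step_coef (x y : F -> R) (i : F) : R :=
  if x i == s i * y i then s i else 0.

Definition free_coord (x y : F -> R) (c : F + F) : bool :=
  match c with
  | inl i => 0 < y i < 1
  | inr i => 0 < x i < s i * y i
  end.

(* A candidate direction [z] moves [y_i] by [z (inl i)] and [x_i] by
   [step_coef x y i * z (inl i) + z (inr i)]; the two linear forms below are
   the resulting changes of [\sum_i y_i] and [\sum_i x_i]. *)
Definition y_change (c : F + F) : R := if c is inl _ then 1 else 0.

Definition x_change (x y : F -> R) (c : F + F) : R :=
  if c is inl i then step_coef x y i else 1.

(* At a vertex, no nonzero direction on the free coordinates preserves both
   sums: it would keep every tight constraint tight. *)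
Lemma free_directions_trivial {x y : F -> R} (z : F + F -> R) :
  vertexP s d k x y -> (forall c, ~~ free_coord x y c -> z c = 0) ->
  \sum_c y_change c * z c = 0 -> \sum_c x_change x y c * z c = 0 ->
  forall c, z c = 0.
Proof.
move=> vtx z_out sum_y sum_x.
pose v i := z (inl i); pose w i := z (inr i).
pose u i := step_coef x y i * v i + w i.
have w_out i : ~~ (0 < x i < s i * y i) -> w i = 0 by exact: z_out (inr i).
have v_out i : ~~ (0 < y i < 1) -> v i = 0 by exact: z_out (inl i).
have sv : \sum_i v i = 0.
  by move: sum_y; rewrite big_sumType /= -!mulr_sumr mul1r mul0r addr0.
have su : \sum_i u i = 0.
  rewrite big_split /=; move: sum_x; rewrite big_sumType /=.
  by under [X in _ + X = _]eq_bigr do rewrite mul1r.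
have tight c : slack x y c = 0 -> dslack u v c = 0.
  case: c => [[]|[]] i /=.
  - move=> x0; have w0 : w i = 0 by apply: w_out; rewrite x0 ltxx.
    rewrite /u w0 addr0 /step_coef x0.
    have [y_free|/v_out ->] := boolP (0 < y i < 1); last by rewrite mulr0.
    case: eqP => [/esym/eqP|]; last by rewrite mul0r.
    by rewrite mulf_eq0 (gt_eqF (proj1 (andP y_free))) orbF => /eqP ->; rewrite mul0r.
  - move=> /eqP; rewrite subr_eq0 => /eqP x_tight.
    have w0 : w i = 0 by apply: w_out; rewrite x_tight ltxx andbF.
    by rewrite /u w0 /step_coef x_tight eqxx addr0 subrr.
  - by move=> y0; rewrite v_out // y0 ltxx.
  - by move=> /eqP; rewrite subr_eq0 => /eqP y1; rewrite v_out ?oppr0 // -y1 ltxx andbF.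
have uv0 := vertex_no_direction vtx su sv tight.
case=> i; first exact: (uv0 i).2.
by have [u0 v0] := uv0 i; move: u0; rewrite /u v0 mulr0 add0r.
Qed.

Lemma vertex_free_card {x y : F -> R} : vertexP s d k x y ->
  (#|[pred i | (0 < y i < 1)%R]| + #|[pred i | (0 < x i < s i * y i)%R]| <= 2)%N.
Proof.
move=> vtx; rewrite -(card_sum_pred (free_coord x y)).
exact: card_le2_of_trivial_kernel (fun z => free_directions_trivial z vtx).
Qed.
End Polytope.

Section Integrality.
Variable R : archiRealFieldType.

Lemma nonint_unit_interval (r : R) :
  0 <= r <= 1 -> (r \isn't a Num.int) = (0 < r < 1).
Proof.
case/andP=> r_ge0 r_le1; apply/idP/idP => [r_nonint|/andP[r_gt0 r_lt1]].
  have r_neq0 : r != 0 by apply: contraNneq r_nonint => ->; exact: int_num0.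
  have r_neq1 : r != 1 by apply: contraNneq r_nonint => ->; exact: int_num1.
  by rewrite lt_def r_neq0 r_ge0 lt_neqAle r_neq1 r_le1.
apply/negP => r_int; have := norm_intr_ge1 r_int (lt0r_neq0 r_gt0).
by rewrite ger0_norm // leNgt r_lt1.
Qed.

Lemma integral_sum_nonint_card (T : finType) (y : T -> R) :
  \sum_i y i \is a Num.int -> #|[pred i | y i \isn't a Num.int]| != 1%N.
Proof.
move=> sum_int; apply/negP => /card1P[i0 only_i0].
have others_int j : j != i0 -> y j \is a Num.int.
  move=> j_neq; apply: contraR j_neq => j_nonint.
  by have := only_i0 j; rewrite !inE j_nonint => <-.
have := only_i0 i0; rewrite !inE eqxx => /negP; apply.
rewrite (bigD1 i0) //= in sum_int.
by rewrite -(addrK (\sum_(j | j != i0) y j) (y i0)) rpredB // rpred_sum.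
Qed.

Lemma endpoint_of_not_inside (a b c : R) :
  a <= b <= c -> ~~ (a < b < c) -> b = a \/ b = c.
Proof.
rewrite !le_eqVlt => /andP[/orP[/eqP<-|a_lt] /orP[/eqP->|b_lt]]; try by [left|right].
by rewrite a_lt b_lt.
Qed.
End Integrality.

Theorem mainTheorem9 (R : archiRealFieldType) (F : finType) (s : F -> R) (d : R) (k : int)
    (hs : forall i, 0 <= s i) (x y : F -> R) :
  vertexP s d k x y ->
  (forall i, y i \is a Num.int) \/
  (#|[pred i | y i \isn't a Num.int]| = 2%N /\
   forall i, x i = 0 \/ x i = s i * y i).
Proof.
move=> vtx; have [[_ sum_y x_bounds y_bounds] _] := vtx.
set N := [pred i | y i \isn't a Num.int].
have N_inside : #|N| = #|[pred i | (0 < y i < 1)%R]|.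
  by apply: eq_card => i; rewrite !inE nonint_unit_interval //; apply/andP; apply: y_bounds.
have free_card := vertex_free_card vtx; rewrite -N_inside in free_card.
have N_neq1 : #|N| != 1%N by apply: integral_sum_nonint_card; rewrite sum_y intr_int.
set X := [pred i | (0 < x i < s i * y i)%R] in free_card.
have [N0|[N2 X0]] : #|N| = 0%N \/ (#|N| = 2%N /\ #|X| = 0%N)
  by move: free_card N_neq1; lia.
  by left=> i; have := card0_eq N0 i; rewrite !inE => /negbFE.
right; split=> // i; apply: endpoint_of_not_inside; first by apply/andP; apply: x_bounds.
by have := card0_eq X0 i; rewrite !inE => ->.
Qed.
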